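(* Let $G$ be a connected graph with vertex set $\{u_1,\dots,u_n\}$, $n\ge2$, having no pair of distinct true twins, and let $\mathcal{H}=\{H_1,\dots,H_n\}$ be a family of non-empty graphs, $H_i$ of order $n_i$. Then $\dim_l(G\circ\mathcal{H})=\sum_{i=1}^n n_i-n$ if and only if $H_i\cong K_{n_i}$ for all $i$.
   Context: All graphs are finite and simple; non-empty means having at least one edge. True twins: distinct vertices $x,y$ with $N[x]=N[y]$. For a connected graph $G$, $\dim_l(G)$ is the minimum size of $S\subseteq V(G)$ such that for every two adjacent vertices $x,y$ there is $s\in S$ with $d_G(s,x)\ne d_G(s,y)$ ($d_G$ the shortest-path distance). Lexicographic product $G\circ\mathcal{H}$: vertex set $\bigcup_i\{u_i\}\times V(H_i)$, $(u_i,v)\sim(u_j,w)$ iff $u_iu_j\in E(G)$, or $i=j$ and $vw\in E(H_i)$. *)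

From mathcomp Require Import all_boot.
Set Implicit Arguments. Unset Strict Implicit. Unset Printing Implicit Defensive.

Definition simple_graph (T : finType) (e : rel T) : Prop :=
  symmetric e /\ irreflexive e.

Definition nonempty_graph (T : finType) (e : rel T) : Prop :=
  exists x y, e x y.

Definition connected_graph (T : finType) (e : rel T) : Prop :=
  forall x y, connect e x y.

Definition cnbhd (T : finType) (e : rel T) (x : T) : {set T} :=
  x |: [set y | e x y].

Definition no_true_twins (T : finType) (e : rel T) : Prop :=
  forall x y, x != y -> cnbhd e x != cnbhd e y.

Definition walk_of_len (T : finType) (e : rel T) (x y : T) (k : nat) : bool :=
  [exists p : k.-tuple T, path e x p && (last x p == y)].

(* shortest-path distance: least k (< #|T|) with a walk of length k from x
   to y; in a connected graph this is the usual distance d_G(x,y). *)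
Definition dist (T : finType) (e : rel T) (x y : T) : nat :=
  find (walk_of_len e x y) (iota 0 #|T|).

Definition local_resolving (T : finType) (e : rel T) (S : {set T}) : bool :=
  [forall x, forall y, e x y ==> [exists s in S, dist e s x != dist e s y]].

Definition ldim (T : finType) (e : rel T) : nat :=
  \big[minn/#|T|]_(S : {set T} | local_resolving e S) #|S|.

Definition lexprod (V : finType) (e : rel V) (T : V -> finType)
  (f : forall i, rel (T i)) : rel {i : V & T i} :=
  fun u v => e (tag u) (tag v) ||
             ((tag u == tag v) && f (tag u) (tagged u) (tagged_as u v)).

Definition complete (n : nat) : rel 'I_n := fun x y => x != y.

Definition graph_iso (T1 T2 : finType) (e1 : rel T1) (e2 : rel T2) : Prop :=
  exists h : T1 -> T2, bijective h /\ forall x y, e2 (h x) (h y) = e1 x y.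

From mathcomp Require Import all_boot perm zify.
Set Implicit Arguments. Unset Strict Implicit. Unset Printing Implicit Defensive.

(* Only distances 0 and 1 matter for resolving an edge.  Two adjacent
   vertices in distinct fibres of G o H are separated, because G has no true
   twins, by any vertex of some fibre k adjacent to exactly one of them; so
   removing from each fibre a proper set of pairwise non-adjacent vertices
   leaves a local resolving set.  Removing one vertex per fibre gives size
   sum n_i - n; if H_i is not complete, removing a non-edge {c, d} of H_i
   instead gives a smaller one.  Conversely, if every H_i is complete, two
   vertices of the same fibre are adjacent true twins of G o H, which no
   third vertex resolves, so every local resolving set misses at most one
   vertex per fibre. *)

Section Distance.
Variables (W : finType) (E : rel W).

Lemma walk_of_len0 x y : walk_of_len E x y 0 = (x == y).
Proof.
apply/existsP/eqP => [[p]|<-]; last by exists [tuple]; rewrite /= eqxx.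
by rewrite (tuple0 p) /= => /eqP.
Qed.

Lemma walk_of_len1 x y : walk_of_len E x y 1 = E x y.
Proof.
apply/existsP/idP => [[[[|z [|w s]] //= _]]|Exy]; last first.
  by exists [tuple y]; rewrite /= Exy eqxx.
by rewrite andbT => /andP[Exz /eqP <-].
Qed.

Lemma dist_eq0 x y : (dist E x y == 0) = (x == y).
Proof.
have : 0 < #|W| by apply/card_gt0P; exists x.
by rewrite /dist; case: #|W| => //= n _; rewrite walk_of_len0; case: (x == y).
Qed.

Lemma dist_eq1 x y : x != y -> (dist E x y == 1) = E x y.
Proof.
move=> neq_xy; have : 1 < #|W|.
  by apply: leq_trans (max_card [set x; y]); rewrite cards2 neq_xy.
rewrite /dist; case: #|W| => [|[|n]] //= _.
by rewrite walk_of_len0 walk_of_len1 (negbTE neq_xy); case: (E x y).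
Qed.

Lemma dist_self_neq x y : x != y -> dist E x x != dist E x y.
Proof.
move=> neq_xy; have /eqP-> : dist E x x == 0 by rewrite dist_eq0.
by rewrite eq_sym dist_eq0.
Qed.

Lemma dist_neq_of_adj s x y :
  s != x -> s != y -> E s x != E s y -> dist E s x != dist E s y.
Proof. by move=> sx sy; apply: contra_neq => eq_d; rewrite -!dist_eq1 // eq_d. Qed.

Lemma walk_of_len_homo (h : W -> W) x y k :
  {homo h : u v / E u v} -> walk_of_len E x y k -> walk_of_len E (h x) (h y) k.
Proof.
move=> homo_h /existsP[p /andP[Ep /eqP last_p]]; apply/existsP.
exists (map_tuple h p); rewrite /= last_map last_p eqxx andbT path_map.
exact: sub_path Ep.
Qed.

Lemma dist_invol (h : W -> W) x y : involutive h -> {mono h : u v / E u v} ->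
  dist E (h x) (h y) = dist E x y.
Proof.
move=> hK mono_h; apply: eq_find => k; apply/idP/idP; last first.
  by apply: walk_of_len_homo => u v; rewrite mono_h.
move=> walk_h; rewrite -[x]hK -[y]hK.
by apply: walk_of_len_homo walk_h => u v; rewrite mono_h.
Qed.

Hypotheses (E_sym : symmetric E) (E_irr : irreflexive E).

Lemma tperm_mono_twins x y : (forall w, w != x -> w != y -> E w x = E w y) ->
  {mono tperm x y : u v / E u v}.
Proof.
move=> twins u v.
case: tpermP => [->|->|/eqP ux /eqP uy]; case: tpermP => [->|->|/eqP vx /eqP vy];
  by rewrite ?E_irr // ?[E _ v]E_sym ?twins.
Qed.

Lemma dist_twins s x y : (forall w, w != x -> w != y -> E w x = E w y) ->
  s != x -> s != y -> dist E s x = dist E s y.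
Proof.
move=> twins sx sy.
rewrite -(dist_invol s x (tpermK x y) (tperm_mono_twins twins)).
by rewrite tpermL tpermD // eq_sym.
Qed.

Lemma local_resolving_twins S x y : local_resolving E S -> E x y ->
  (forall w, w != x -> w != y -> E w x = E w y) -> (x \in S) || (y \in S).
Proof.
move=> /forallP/(_ x)/forallP/(_ y)/implyP resS Exy twins.
have /existsP[s /andP[sS]] := resS Exy.
have [<-|sx] := eqVneq s x; first by rewrite sS.
have [<-|sy] := eqVneq s y; first by rewrite sS orbT.
by rewrite (dist_twins twins sx sy) eqxx.
Qed.

End Distance.

Section LocalDimension.
Variables (W : finType) (E : rel W).

Lemma ldim_le S : local_resolving E S -> ldim E <= #|S|.
Proof.
move=> resS; rewrite /ldim -big_filter.
have : S \in [seq S <- index_enum {set W} | local_resolving E S].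
  by rewrite mem_filter resS mem_index_enum.
elim: [seq _ <- _ | _] => //= S' r IHr; rewrite in_cons big_cons.
case/orP=> [/eqP <-|S_r]; first exact: geq_minl.
exact: leq_trans (geq_minr _ _) (IHr S_r).
Qed.

Lemma ldim_ge m : m <= #|W| ->
  (forall S, local_resolving E S -> m <= #|S|) -> m <= ldim E.
Proof.
by move=> m_le m_res; rewrite /ldim; elim/big_ind: _ => // a b; rewrite leq_min => ->.
Qed.

End LocalDimension.

Lemma adj_separated (V : finType) (e : rel V) :
  symmetric e -> irreflexive e -> no_true_twins e ->
  forall i j, e i j -> exists k, [/\ k != i, k != j & e k i != e k j].
Proof.
move=> e_sym e_irr twin_free i j eij.
have neq_ij : i != j by apply: contraTneq eij => ->; rewrite e_irr.
have [k k_sep|same] := pickP (fun k => (k \in cnbhd e i) != (k \in cnbhd e j)).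
  rewrite !inE in k_sep; exists k.
  have [ki|/negbTE ki] := eqVneq k i; first by rewrite ki eqxx e_sym eij orbT in k_sep.
  have [kj|/negbTE kj] := eqVneq k j; first by rewrite kj eqxx eij orbT in k_sep.
  by rewrite ki kj /= ![e _ k]e_sym in k_sep.
have eq_nbhd : cnbhd e i = cnbhd e j by apply/setP => k; apply/eqP/negbFE/same.
by move: (twin_free _ _ neq_ij); rewrite eq_nbhd eqxx.
Qed.

Lemma edge_avoids_nonedge (X : finType) (E : rel X) (p q c d : X) :
  symmetric E -> irreflexive E -> E p q -> ~~ E c d -> exists a, (a != c) && (a != d).
Proof.
move=> E_sym E_irr Epq nEcd.
case/boolP: ((p != c) && (p != d)) => [|pcd]; first by exists p.
case/boolP: ((q != c) && (q != d)) => [|qcd]; first by exists q.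
move: pcd qcd Epq; rewrite !negb_and !negbK => /orP[]/eqP-> /orP[]/eqP->;
  by rewrite ?E_irr ?[E d c]E_sym ?(negbTE nEcd).
Qed.

Lemma graph_iso_completeP (X : finType) (E : rel X) : irreflexive E ->
  graph_iso E (@complete #|X|) <-> (forall x y, x != y -> E x y).
Proof.
move=> E_irr; split => [[h [h_bij h_iso]] x y neq_xy | E_compl].
  by rewrite -h_iso /complete (inj_eq (bij_inj h_bij)).
exists enum_rank; split => [|x y]; first exact: Bijective enum_rankK enum_valK.
rewrite /complete (inj_eq enum_rank_inj).
by have [<-|/E_compl ->] := eqVneq x y; rewrite ?E_irr.
Qed.

Section LexicographicProduct.
Local Unset Implicit Arguments.
Variables (V : finType) (e : rel V) (T : V -> finType) (f : forall i, rel (T i)).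
Hypotheses (e_sym : symmetric e) (e_irr : irreflexive e).
Hypotheses (f_sym : forall i, symmetric (f i)) (f_irr : forall i, irreflexive (f i)).
Hypotheses (e_twin_free : no_true_twins e) (f_nonempty : forall i, nonempty_graph (f i)).

Local Notation W := {i : V & T i}.
Local Notation L := (lexprod e f).

Lemma lexprod_fiber i (a b : T i) : L (Tagged T a) (Tagged T b) = f i a b.
Proof. by rewrite /lexprod /= e_irr eqxx tagged_asE. Qed.

Lemma lexprod_tag u v : tag u != tag v -> L u v = e (tag u) (tag v).
Proof. by rewrite /lexprod => /negbTE->; rewrite orbF. Qed.

Lemma lexprod_sym : symmetric L.
Proof.
move=> [i a] [j b]; have [eq_ij|neq_ij] := eqVneq i j.
  by subst j; rewrite !lexprod_fiber f_sym.
by rewrite !lexprod_tag /= 1?e_sym // eq_sym.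
Qed.

Lemma lexprod_irr : irreflexive L.
Proof. by move=> [i a]; rewrite lexprod_fiber f_irr. Qed.

Lemma card_lexprod : #|{: W}| = \sum_i #|T i|.
Proof. by rewrite card_tagged sumnE big_map big_enum. Qed.

Lemma lexprod_resolving (R : {set W}) :
  (forall i, exists a : T i, Tagged T a \notin R) ->
  {in R &, forall u v, L u v -> tag u != tag v} -> local_resolving L (~: R).
Proof.
move=> fiber_notR R_indep.
apply/forallP => x; apply/forallP => y; apply/implyP => Lxy.
have neq_xy : x != y by apply: contraTneq Lxy => ->; rewrite lexprod_irr.
have [xR|xR] := boolP (x \in R); last first.
  by apply/existsP; exists x; rewrite inE xR dist_self_neq.
have [yR|yR] := boolP (y \in R); last first.
  by apply/existsP; exists y; rewrite inE yR eq_sym dist_self_neq // eq_sym.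
have neq_tag := R_indep _ _ xR yR Lxy.
have [k [kx ky sep]] := adj_separated e_sym e_irr e_twin_free
  (etrans (esym (lexprod_tag _ _ neq_tag)) Lxy).
have [a aR] := fiber_notR k; apply/existsP; exists (Tagged T a); rewrite inE aR.
have neq_tag_a w : k != tag w -> Tagged T a != w by apply: contra_neq => <-.
by rewrite dist_neq_of_adj ?neq_tag_a ?lexprod_tag.
Qed.

Lemma lexprod_complete_twins i (a b : T i) :
  (forall c d : T i, c != d -> f i c d) ->
  forall w, w != Tagged T a -> w != Tagged T b -> L w (Tagged T a) = L w (Tagged T b).
Proof.
move=> f_compl [j c] ca cb; have [eq_ji|neq_ji] := eqVneq j i; last first.
  by rewrite !lexprod_tag.
move: c ca cb; rewrite eq_ji => c; rewrite !eq_Tagged /= => ca cb.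
by rewrite !lexprod_fiber !f_compl.
Qed.

Lemma tag_inj_setC_resolving S : (forall i (a b : T i), a != b -> f i a b) ->
  local_resolving L S -> {in ~: S &, injective tag}.
Proof.
move=> f_compl resS [i a] [j b]; rewrite !inE /= => aS bS eq_ij; subst j.
apply/eqP; rewrite eq_Tagged /=; apply/negPn/negP => neq_ab.
have := local_resolving_twins lexprod_sym lexprod_irr resS
  (etrans (lexprod_fiber _ a b) (f_compl _ _ _ neq_ab))
  (lexprod_complete_twins _ a b (f_compl i)).
by rewrite (negbTE aS) (negbTE bS).
Qed.

Lemma ldim_lexprod_ge : (forall i (a b : T i), a != b -> f i a b) ->
  #|{: W}| - #|V| <= ldim L.
Proof.
move=> f_compl; apply: ldim_ge => [|S resS]; first exact: leq_subr.
rewrite leq_subLR -(cardsC S) addnC leq_add2r.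
exact: leq_card_in (tag_inj_setC_resolving S f_compl resS).
Qed.

Lemma ldim_lexprod_le_setC (R : {set W}) :
  (forall i, exists a : T i, Tagged T a \notin R) ->
  {in R &, forall u v, L u v -> tag u != tag v} -> ldim L <= #|{: W}| - #|R|.
Proof.
move=> fiber_notR R_indep.
by rewrite -(cardsC R) addKn; apply/ldim_le/lexprod_resolving.
Qed.

Definition section_set (r : forall i, T i) : {set W} := [set Tagged T (r i) | i : V].

Lemma card_section_set r : #|section_set r| = #|V|.
Proof. by rewrite card_imset // => i j /(congr1 tag). Qed.

Lemma mem_section_set r u : (u \in section_set r) = (u == Tagged T (r (tag u))).
Proof. by apply/imsetP/eqP => [[i _ ->] //|->]; exists (tag u). Qed.

Lemma section_set_indep r :
  {in section_set r &, forall u v, L u v -> tag u != tag v}.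
Proof.
move=> u v; rewrite !mem_section_set => /eqP eq_u /eqP eq_v Luv.
apply: contraTneq Luv => eq_tag.
have -> : u = v by rewrite eq_u eq_v eq_tag.
by rewrite lexprod_irr.
Qed.

Lemma fiber_notin_section_set r i : exists a : T i, Tagged T a \notin section_set r.
Proof.
have [p [q fpq]] := f_nonempty i.
have [a /andP[ar _]] :=
  edge_avoids_nonedge (f_sym i) (f_irr i) fpq (negbT (f_irr i (r i))).
by exists a; rewrite mem_section_set eq_Tagged.
Qed.

Lemma ldim_lexprod_le : ldim L <= #|{: W}| - #|V|.
Proof.
have [r _] : exists r : forall i, T i, V -> True.
  apply: (@fin_all_exists V T (fun _ _ => True)) => i.
  by have [a _] := f_nonempty i; exists a.
rewrite -(card_section_set r); apply: ldim_lexprod_le_setC.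
  exact: fiber_notin_section_set.
exact: section_set_indep.
Qed.

Lemma ldim_lexprod_lt i0 (c d : T i0) :
  c != d -> ~~ f i0 c d -> ldim L < #|{: W}| - #|V|.
Proof.
move=> neq_cd nfcd.
(* [r_c] is phrased with [i0 = i] so that no cast of [c] along it is needed. *)
have [r r_c] :
    exists r : forall i, T i, forall i, i0 = i -> Tagged T (r i) = Tagged T c.
  apply: (@fin_all_exists V T (fun i a => i0 = i -> Tagged T a = Tagged T c)) => i.
  have [<-|neq_i] := eqVneq i0 i; first by exists c.
  by have [a _] := f_nonempty i; exists a => eq_i; rewrite eq_i eqxx in neq_i.
have {}r_c : r i0 = c := eq_from_Tagged (r_c i0 erefl).
have sec_i0 v : v \in section_set r -> tag v = i0 -> v = Tagged T c.
  by rewrite mem_section_set => /eqP-> /= ->; rewrite r_c.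
set R := Tagged T d |: section_set r.
have dR : Tagged T d \notin section_set r.
  apply/negP => dR; have eq_dc := eq_from_Tagged (sec_i0 _ dR erefl).
  by rewrite eq_dc eqxx in neq_cd.
have card_R : #|R| = #|V|.+1 by rewrite cardsU1 dR card_section_set.
have : ldim L <= #|{: W}| - #|R|.
  apply: ldim_lexprod_le_setC => [i|u v].
    have [<-|neq_i] := eqVneq i0 i.
      have [p [q fpq]] := f_nonempty i0.
      have [a /andP[ac ad]] := edge_avoids_nonedge (f_sym i0) (f_irr i0) fpq nfcd.
      exists a; rewrite in_setU1 mem_section_set /= r_c !eq_Tagged /=.
      by rewrite negb_or ad ac.
    have [a ar] := fiber_notin_section_set r i.
    have ad : Tagged T a != Tagged T d by apply: contra_neq neq_i => /(congr1 tag).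
    by exists a; rewrite in_setU1 negb_or ad.
  rewrite !in_setU1 => /predU1P[->|uR] /predU1P[->|vR] Luv.
  - by rewrite lexprod_irr in Luv.
  - apply: contraTneq Luv => eq_tag.
    by rewrite (sec_i0 _ vR (esym eq_tag)) lexprod_fiber f_sym (negbTE nfcd).
  - apply: contraTneq Luv => eq_tag.
    by rewrite (sec_i0 _ uR eq_tag) lexprod_fiber (negbTE nfcd).
  - exact: section_set_indep r u v uR vR Luv.
have : #|R| <= #|{: W}| := max_card R.
rewrite card_R; lia.
Qed.

End LexicographicProduct.

Theorem theorem4 (V : finType) (e : rel V) (T : V -> finType)
    (f : forall i : V, rel (T i)) :
  simple_graph e ->
  connected_graph e ->
  1 < #|V| ->
  no_true_twins e ->
  (forall i, simple_graph (f i)) ->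
  (forall i, nonempty_graph (f i)) ->
  (ldim (@lexprod V e T f) = \sum_(i : V) #|T i| - #|V| <->
   forall i, graph_iso (f i) (@complete #|T i|)).
Proof.
move=> [e_sym e_irr] _ _ twin_free f_simple f_nonempty.
have f_sym i : symmetric (f i) by case: (f_simple i).
have f_irr i : irreflexive (f i) by case: (f_simple i).
rewrite -card_lexprod; split => [ldimE i | f_compl].
  apply/graph_iso_completeP => // a b neq_ab; apply/negPn/negP => nfab.
  have := ldim_lexprod_lt _ _ _ _ e_sym e_irr f_sym f_irr twin_free f_nonempty
    _ _ _ neq_ab nfab.
  by rewrite ldimE ltnn.
apply/eqP; rewrite eqn_leq ldim_lexprod_le //.
apply: ldim_lexprod_ge => // i; exact/graph_iso_completeP.
Qed.
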